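(* A tiling of the unit square by axis-parallel rectangles which is fixed by the dihedral group $D_8$ of symmetries of the square has either $4k$ or $4k+1$ tiles, for some nonnegative integer $k$.
   Context: A tiling of the unit square is a decomposition into finitely many axis-parallel rectangles with disjoint interiors; $D_8$ (order $8$) acts on tilings via the symmetries of the square, and a tiling is fixed if every symmetry maps it to itself. *)

From Stdlib Require Import Reals List.
Import ListNotations.
Open Scope R_scope.

Record rect : Type := Rect { rx0 : R; rx1 : R; ry0 : R; ry1 : R }.

Definition valid_rect (r : rect) : Prop :=
  0 <= rx0 r /\ rx0 r < rx1 r /\ rx1 r <= 1 /\
  0 <= ry0 r /\ ry0 r < ry1 r /\ ry1 r <= 1.

Definition in_rect (r : rect) (p : R * R) : Prop :=
  rx0 r <= fst p <= rx1 r /\ ry0 r <= snd p <= ry1 r.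

Definition in_interior (r : rect) (p : R * R) : Prop :=
  rx0 r < fst p < rx1 r /\ ry0 r < snd p < ry1 r.

Definition in_unit_square (p : R * R) : Prop :=
  0 <= fst p <= 1 /\ 0 <= snd p <= 1.

Definition is_tiling (T : list rect) : Prop :=
  NoDup T /\
  (forall r, In r T -> valid_rect r) /\
  (forall r s, In r T -> In s T -> r <> s ->
     forall p, ~ (in_interior r p /\ in_interior s p)) /\
  (forall p, in_unit_square p -> exists r, In r T /\ in_rect r p).

(* The dihedral group D_8 of the square [0,1]^2: an element is encoded by
   (swap, fx, fy): first optionally swap coordinates, then optionally reflect
   the first coordinate x |-> 1-x and the second y |-> 1-y.  These 8 maps are
   exactly the symmetries of the unit square. *)
Definition D8 : Type := (bool * bool * bool)%type.

Definition d8_act (g : D8) (p : R * R) : R * R :=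
  let '(sw, fx, fy) := g in
  let '(u, v) := if sw then (snd p, fst p) else (fst p, snd p) in
  (if fx then 1 - u else u, if fy then 1 - v else v).

Definition fixed_by (g : D8) (T : list rect) : Prop :=
  forall r, In r T -> exists s, In s T /\
    forall p, in_rect s p <-> exists q, in_rect r q /\ p = d8_act g q.

Definition D8_fixed (T : list rect) : Prop := forall g : D8, fixed_by g T.

(** The quarter turn permutes the tiles, and its fourth power is the identity,
    so its orbits have size 1, 2 or 4.  A tile in an orbit of size 1 or 2 is
    invariant under the half turn, hence contains the centre of the square in
    its interior; tiles have disjoint interiors, so there is at most one such
    tile, and it is then fixed by the quarter turn itself.  All other tiles come
    in orbits of four. *)

From Stdlib Require Import Reals List Arith Lia Lra.
Import ListNotations.

Section Counting.
Open Scope nat_scope.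
Variable A : Type.
Hypothesis eq_dec : forall x y : A, {x = y} + {x <> y}.

Definition memb (xs : list A) (y : A) : bool :=
  if in_dec eq_dec y xs then true else false.

Lemma memb_In xs y : memb xs y = true <-> In y xs.
Proof. unfold memb; destruct (in_dec eq_dec y xs); split; easy. Qed.

Lemma length_filter_not_memb (xs L : list A) :
  NoDup xs -> NoDup L -> incl xs L ->
  length L = length xs + length (filter (fun y => negb (memb xs y)) L).
Proof.
  intros Dxs DL Hincl.
  rewrite <- (filter_length (memb xs) L). f_equal.
  apply Nat.le_antisymm; apply NoDup_incl_length.
  - apply NoDup_filter, DL.
  - intros y Hy. apply filter_In in Hy. apply memb_In, Hy.
  - exact Dxs.
  - intros y Hy. apply filter_In. rewrite memb_In. auto.
Qed.

Variable f : A -> A.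
Hypothesis f_order4 : forall x, f (f (f (f x))) = x.

Lemma f_inj x y : f x = f y -> x = y.
Proof. intro E. rewrite <- (f_order4 x), <- (f_order4 y), E. reflexivity. Qed.

Definition orbit4 (x : A) : list A := [x; f x; f (f x); f (f (f x))].

Lemma orbit4_NoDup x : f (f x) <> x -> NoDup (orbit4 x).
Proof.
  intro H2.
  assert (H1 : f x <> x) by (intro E; apply H2; rewrite E; exact E).
  assert (H3 : f (f (f x)) <> x).
  { intro E. apply H1. pose proof (f_order4 x) as H4. rewrite E in H4. exact H4. }
  repeat constructor; simpl; intuition;
    repeat match goal with E : f _ = f _ |- _ => apply f_inj in E end;
    congruence.
Qed.

Lemma orbit4_In_f x y : In (f y) (orbit4 x) -> In y (orbit4 x).
Proof.
  simpl. intros [E|[E|[E|[E|[]]]]]; apply f_inj in E || (rewrite <- (f_order4 y), E);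
    simpl; auto.
Qed.

Lemma length_mod4_no_period2 : forall L : list A, NoDup L ->
  (forall x, In x L -> In (f x) L) -> (forall x, In x L -> f (f x) <> x) ->
  exists k, length L = 4 * k.
Proof.
  intro L. remember (length L) as n eqn:Hn. revert L Hn.
  induction n as [n IH] using lt_wf_ind.
  intros [|x L0] Hn DL Hclosed Hper; [exists 0; simpl in *; lia|].
  set (L := x :: L0) in *.
  set (R := filter (fun y => negb (memb (orbit4 x) y)) L).
  assert (Hx : In x L) by (left; reflexivity).
  assert (Horbit : incl (orbit4 x) L)
    by (intros y [<-|[<-|[<-|[<-|[]]]]]; auto).
  assert (Hlen : length L = 4 + length R)
    by exact (length_filter_not_memb _ _ (orbit4_NoDup x (Hper x Hx)) DL Horbit).
  destruct (IH (length R)) with (L := R) as [k Hk]; [lia|reflexivity|..].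
  - apply NoDup_filter, DL.
  - intros y Hy. apply filter_In in Hy as [Hy Hny]. apply filter_In.
    split; [auto|]. apply Bool.negb_true_iff, Bool.not_true_iff_false.
    rewrite memb_In. intro Hfy. apply orbit4_In_f, memb_In in Hfy.
    rewrite Hfy in Hny. discriminate.
  - intros y Hy. apply Hper. apply filter_In in Hy. apply Hy.
  - exists (S k). lia.
Qed.

Lemma length_mod4_one_period2 (L : list A) : NoDup L ->
  (forall x, In x L -> In (f x) L) ->
  (forall x y, In x L -> In y L -> f (f x) = x -> f (f y) = y -> x = y) ->
  exists k, length L = 4 * k \/ length L = 4 * k + 1.
Proof.
  intros DL Hclosed Huniq.
  destruct (Exists_dec (fun c => f (f c) = c) L) as [Hc|Hnone].
  { intro c. apply eq_dec. }
  - apply Exists_exists in Hc as [c [Hc Hc2]].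
    assert (Hfc : f c = c) by (apply Huniq; auto; rewrite Hc2; reflexivity).
    set (R := filter (fun y => negb (memb [c] y)) L).
    assert (Hlen : length L = 1 + length R).
    { apply (length_filter_not_memb [c] L); [repeat constructor; auto | exact DL |].
      intros y [<-|[]]. exact Hc. }
    assert (HR : forall y, In y R <-> In y L /\ y <> c).
    { intro y. unfold R. rewrite filter_In, Bool.negb_true_iff,
        <- Bool.not_true_iff_false, memb_In. simpl. intuition. }
    destruct (length_mod4_no_period2 R) as [k Hk].
    + apply NoDup_filter, DL.
    + intros y Hy. apply HR in Hy as [Hy Hyc]. apply HR. split; auto.
      intro E. apply Hyc, f_inj. congruence.
    + intros y Hy E. apply HR in Hy as [Hy Hyc]. apply Hyc, Huniq; auto.
    + exists k. right. lia.
  - destruct (length_mod4_no_period2 L) as [k Hk]; auto.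
    + intros y Hy E. apply Hnone, Exists_exists. eauto.
    + exists k. left. exact Hk.
Qed.
End Counting.

(* The rotation (x, y) |-> (1 - y, x); [rect_rot r] is the image of [r]. *)
Definition quarter_turn : D8 := (true, true, false).

Definition rect_rot (r : rect) : rect :=
  Rect (1 - ry1 r) (1 - ry0 r) (rx0 r) (rx1 r).

Lemma rect_rot_order4 r : rect_rot (rect_rot (rect_rot (rect_rot r))) = r.
Proof. destruct r; unfold rect_rot; simpl; f_equal; ring. Qed.

Lemma rect_eq_dec (r s : rect) : {r = s} + {r <> s}.
Proof.
  destruct r as [a b c d], s as [a' b' c' d'].
  destruct (Req_EM_T a a'); [|right; congruence].
  destruct (Req_EM_T b b'); [|right; congruence].
  destruct (Req_EM_T c c'); [|right; congruence].
  destruct (Req_EM_T d d'); [|right; congruence].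
  left; subst; reflexivity.
Qed.

Lemma rect_ext (s t : rect) :
  rx0 s <= rx1 s -> ry0 s <= ry1 s -> rx0 t <= rx1 t -> ry0 t <= ry1 t ->
  (forall p, in_rect s p <-> in_rect t p) -> s = t.
Proof.
  intros Hsx Hsy Htx Hty H.
  pose proof (proj1 (H (rx0 s, ry0 s))) as H1.
  pose proof (proj1 (H (rx1 s, ry1 s))) as H2.
  pose proof (proj2 (H (rx0 t, ry0 t))) as H3.
  pose proof (proj2 (H (rx1 t, ry1 t))) as H4.
  unfold in_rect in *; destruct s, t; simpl in *. f_equal; lra.
Qed.

Lemma in_rect_rot r p :
  in_rect (rect_rot r) p <-> exists q, in_rect r q /\ p = d8_act quarter_turn q.
Proof.
  destruct p as [a b]. unfold in_rect, rect_rot; simpl. split.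
  - intros Hp. exists (b, 1 - a). simpl. split; [lra|]. f_equal; ring.
  - intros [[u v] [Hq E]]. injection E as -> ->. simpl in Hq. lra.
Qed.

Lemma rect_rot_In T r :
  is_tiling T -> fixed_by quarter_turn T -> In r T -> In (rect_rot r) T.
Proof.
  intros (_ & Hvalid & _) Hfix Hr.
  destruct (Hfix r Hr) as [s [Hs Hsr]].
  replace (rect_rot r) with s; [exact Hs|].
  pose proof (Hvalid r Hr) as Vr. pose proof (Hvalid s Hs) as Vs.
  unfold valid_rect in *.
  apply rect_ext; try (simpl; lra).
  intro p. rewrite Hsr, in_rect_rot. reflexivity.
Qed.

Lemma rect_rot2_center r :
  valid_rect r -> rect_rot (rect_rot r) = r -> in_interior r (/2, /2).
Proof.
  destruct r as [x0 x1 y0 y1]. unfold rect_rot, valid_rect, in_interior; simpl.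
  intros Hv E. injection E as E0 E1 E2 E3. lra.
Qed.

Theorem lemma10 (T : list rect) :
  is_tiling T -> D8_fixed T ->
  exists k : nat, length T = (4 * k)%nat \/ length T = (4 * k + 1)%nat.
Proof.
  intros Htiling Hfixed.
  pose proof Htiling as (HNoDup & Hvalid & Hdisjoint & _).
  apply (length_mod4_one_period2 rect rect_eq_dec rect_rot rect_rot_order4 T HNoDup).
  - intros r Hr. exact (rect_rot_In T r Htiling (Hfixed quarter_turn) Hr).
  - intros r s Hr Hs Hr2 Hs2.
    destruct (rect_eq_dec r s) as [|Hrs]; [assumption|exfalso].
    apply (Hdisjoint r s Hr Hs Hrs (/2, /2)).
    split; apply rect_rot2_center; auto.
Qed.
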